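(* There is a universal constant $C$ such that for all positive integers $k,n$, every $\epsilon\in(0,1)$, and every integer $g$, there is a $k$-party, one-round protocol using public randomness for the Sum-Equal problem over $\mathbb{Z}$ with $n$-bit inputs relative to $g$, with error at most $\epsilon$ and total communication complexity at most $k\log(k/\epsilon)+C\cdot k$.
   Context: Model: parties $P_1,\dots,P_k$ each hold an integer input $x_i\in\{0,\dots,2^n-1\}$; a coordinator (distinct from the parties) wants to compute $f(x_1,\dots,x_k)$. In a one-round protocol with public randomness, a random string $r$ is shared by all parties and the coordinator; each party sends a single message depending only on its own input and $r$; the coordinator outputs a value depending only on the messages and $r$; there is no other communication. Error at most $\epsilon$ means that for every input the probability over $r$ of a wrong output is at most $\epsilon$. Total communication complexity is the maximum total number of bits sent. Sum-Equal over $\mathbb{Z}$ relative to $g$: $f=1$ if $\sum_i x_i=g$ and $f=0$ otherwise. $\log$ is base 2. *)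

From Stdlib Require Import Reals.
From mathcomp Require Import all_boot all_order all_algebra.
Set Implicit Arguments. Unset Strict Implicit. Unset Printing Implicit Defensive.

Definition log2 (x : R) : R := Rdiv (ln x) (ln 2).

(* The public random string is uniform over the finite set 'I_(rand_size.+1)
   (nonempty). *)
Record protocol (k : nat) := Protocol {
  rand_size : nat;
  msg : 'I_k -> nat -> 'I_rand_size.+1 -> seq bool;
  out : ('I_k -> seq bool) -> 'I_rand_size.+1 -> bool
}.

Definition run k (P : protocol k) (x : 'I_k -> nat) (r : 'I_(rand_size P).+1)
  : bool := @out k P (fun i => @msg k P i (x i) r) r.

Definition valid_input k (n : nat) (x : 'I_k -> nat) : Prop :=
  forall i, x i < 2 ^ n.

Definition sum_equal k (g : int) (x : 'I_k -> nat) : bool :=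
  ((\sum_(i < k) (x i)%:Z)%R == g).

Definition error_prob k (g : int) (P : protocol k) (x : 'I_k -> nat) : R :=
  Rdiv (INR #|[set r : 'I_(rand_size P).+1 | @run k P x r != @sum_equal k g x]|)
       (INR (rand_size P).+1).

Definition error_at_most k n (g : int) (P : protocol k) (eps : R) : Prop :=
  forall x, @valid_input k n x -> Rle (@error_prob k g P x) eps.

Definition total_bits k (P : protocol k) (x : 'I_k -> nat)
  (r : 'I_(rand_size P).+1) : nat :=
  \sum_(i < k) size (@msg k P i (x i) r).

Definition comm_at_most k n (P : protocol k) (B : R) : Prop :=
  forall x r, @valid_input k n x -> Rle (INR (@total_bits k P x r)) B.

From Stdlib Require Import Reals Lra.
From mathcomp Require Import all_boot all_order all_algebra zify.
Set Implicit Arguments. Unset Strict Implicit. Unset Printing Implicit Defensive.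
Import GRing.Theory Num.Theory.

(* Fix a prime p > k 2^n + |g| and a public r uniform in [0, p).  Party i
   sends the l leading bits of ((r x_i) mod p) / p.  The residues sum to some
   Y < k p with Y = r (Σ x_i) (mod p), and the messages determine Y 2^l / p up
   to an additive error k.  The coordinator accepts iff one of the k
   candidates (r g mod p) + j p, j < k, is consistent with that estimate.
   If Σ x_i = g, the candidate j = Y / p is.  Otherwise D = Σ x_i - g is a
   unit mod p, acceptance forces r D mod p to lie within k p / 2^l of 0
   mod p, and as r |-> r D is a bijection mod p this happens for at most
   2 (k p / 2^l + 1) values of r.  With 2^l ~ 4k/eps and p >= 4/eps the error
   is at most eps, using k l <= k log (k/eps) + 3k bits. *)

Fixpoint bits (l q : nat) : seq bool :=
  if l is l'.+1 then odd q :: bits l' q./2 else [::].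

Fixpoint nat_of_bits (s : seq bool) : nat :=
  if s is b :: s' then b + (nat_of_bits s').*2 else 0.

Lemma size_bits l q : size (bits l q) = l.
Proof. by elim: l q => [|l IH] q //=; rewrite IH. Qed.

Lemma bitsK l q : q < 2 ^ l -> nat_of_bits (bits l q) = q.
Proof.
elim: l q => [|l IH] q /=; first by rewrite expn0 ltnS leqn0 => /eqP.
by rewrite expnS => q_lt; rewrite IH ?odd_double_half //; lia.
Qed.

Lemma sum_succ k (a : 'I_k -> nat) : \sum_(i < k) (a i).+1 = \sum_(i < k) a i + k.
Proof.
under eq_bigr => i _ do rewrite -addn1.
by rewrite big_split /= sum1_card card_ord.
Qed.

Lemma sum_ltn_const k (a : 'I_k -> nat) b :
  (forall i, a i < b) -> \sum_(i < k) a i + k <= k * b.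
Proof.
move=> a_lt; rewrite -sum_succ -[k in k * _]card_ord -sum1_card big_distrl /=.
by apply: leq_sum => i _; rewrite mul1n a_lt.
Qed.

Section Quantization.

Variables P L : nat.
Hypothesis P_gt0 : 0 < P.

Definition quantize (a : nat) : nat := (a %% P * L) %/ P.

Lemma quantize_lt a : 0 < L -> quantize a < L.
Proof. by move=> L_gt0; rewrite ltn_divLR // mulnC ltn_pmul2l ?ltn_pmod. Qed.

Lemma quantize_bounds a :
  quantize a * P <= a %% P * L /\ (a %% P * L).+1 <= (quantize a).+1 * P.
Proof. by split; [exact: leq_divM | exact: ltn_ceil]. Qed.

Lemma sum_quantize_bounds k (a : 'I_k -> nat) :
  let Y := \sum_(i < k) a i %% P in
  let Q := \sum_(i < k) quantize (a i) in
  [/\ Q * P <= Y * L, Y * L + k <= (Q + k) * P & Y + k <= k * P].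
Proof.
move=> Y Q; split.
- rewrite /Q /Y !big_distrl /=; apply: leq_sum => i _.
  by case: (quantize_bounds (a i)).
- have -> : Y * L + k = \sum_(i < k) (a i %% P * L).+1.
    by rewrite /Y big_distrl /= sum_succ.
  rewrite /Q -sum_succ big_distrl /=.
  by apply: leq_sum => i _; case: (quantize_bounds (a i)).
- by apply: sum_ltn_const => i; rewrite ltn_pmod.
Qed.

End Quantization.

Definition sum_test (k P L : nat) (g : int) (r Q : nat) : bool :=
  let z := absz ((r%:Z * g) %% P)%Z in
  [exists j : 'I_k, (Q * P <= (z + j * P) * L) && ((z + j * P) * L < (Q + k) * P)].

Lemma sum_test_complete k P L r (x : 'I_k -> nat) (g : int) : 0 < k -> 0 < P ->
  (\sum_(i < k) (x i)%:Z)%R = g ->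
  sum_test k P L g r (\sum_(i < k) quantize P L (r * x i)).
Proof.
move=> k_gt0 P_gt0 sum_g.
have [QP_le YL_le Y_lt] := sum_quantize_bounds L P_gt0 (fun i => r * x i).
set Y := \sum_(i < k) (r * x i) %% P in QP_le YL_le Y_lt.
set Q := \sum_(i < k) quantize P L _ in QP_le YL_le *.
have z_eq : absz ((r%:Z * g) %% P)%Z = Y %% P.
  rewrite -sum_g -(big_morph Posz PoszD (erefl (0 : int))) -PoszM modz_nat /=.
  by rewrite /Y modn_summ big_distrr.
have j_lt : Y %/ P < k by rewrite ltn_divLR //; lia.
apply/existsP; exists (Ordinal j_lt) => /=.
rewrite z_eq addnC -divn_eq; apply/andP; split=> //; lia.
Qed.

Definition near_zero (k P L t : nat) : bool :=
  (t * L < k * P) || ((P - t) * L < k * P).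

Lemma near_zero_of_small_representative (k P L t : nat) (e m : int) :
  e = (t%:Z + m * P)%R -> t < P -> (`|e| * L < (k * P)%N)%R -> near_zero k P L t.
Proof.
move=> -> t_lt small; rewrite /near_zero.
have [m_ge0|m_lt0] := lerP 0 m; apply/orP; [left|right].
- have : (t%:Z <= `|t%:Z + m * P|)%R by rewrite ger0_norm; nia.
  nia.
- have : ((P - t)%N%:Z <= `|t%:Z + m * P|)%R by rewrite ltr0_norm; nia.
  nia.
Qed.

Definition residue (P : nat) (D : int) (r : nat) : nat := absz ((r%:Z * D) %% P)%Z.

Lemma residue_lt P D r : 0 < P -> residue P D r < P.
Proof.
move=> P_gt0; have P_neq0 : (P%:Z != 0)%R by rewrite eqz_nat -lt0n.
by rewrite -ltz_nat /residue gez0_abs ?modz_ge0 // ltz_pmod // ltz_nat.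
Qed.

Lemma sum_test_sound k P L r (x : 'I_k -> nat) (g : int) : 0 < P ->
  sum_test k P L g r (\sum_(i < k) quantize P L (r * x i)) ->
  near_zero k P L (residue P ((\sum_(i < k) (x i)%:Z) - g)%R r).
Proof.
move=> P_gt0 /existsP [j /andP [lo hi]].
have k_gt0 : 0 < k := leq_ltn_trans (leq0n j) (ltn_ord j).
have [QP_le YL_le _] := sum_quantize_bounds L P_gt0 (fun i => r * x i).
set Y := \sum_(i < k) (r * x i) %% P in QP_le YL_le.
set Q := \sum_(i < k) quantize P L _ in QP_le YL_le lo hi.
set z := absz _ in lo hi.
set S := \sum_(i < k) x i.
have -> : (\sum_(i < k) (x i)%:Z = S%:Z)%R by rewrite (big_morph Posz PoszD (erefl (0 : int))).
have P_neq0 : (P%:Z != 0)%R by rewrite eqz_nat -lt0n.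
have z_eq : (z%:Z = (r%:Z * g) %% P)%Z by rewrite /z gez0_abs // modz_ge0.
have Y_mod : Y %% P = (r * S) %% P by rewrite /Y /S modn_summ big_distrr.
have E1 := divn_eq Y P; have E2 := divn_eq (r * S) P.
have E3 := divz_eq (r%:Z * g)%R P; have E4 := divz_eq (r%:Z * (S%:Z - g))%R P.
rewrite /residue; set t := ((r%:Z * (S%:Z - g)) %% P)%Z in E4 *.
have t_eq : (t = (absz t)%:Z)%R by rewrite gez0_abs // modz_ge0.
have t_lt : absz t < P by rewrite -ltz_nat -t_eq ltz_pmod // ltz_nat.
pose e : int := (Y%:Z - z%:Z - (j * P)%N%:Z)%R.
pose m : int := ((Y %/ P)%:Z - ((r * S) %/ P)%:Z + ((r%:Z * g) %/ P)%Z - j%:Z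
                  + ((r%:Z * (S%:Z - g)) %/ P)%Z)%R.
apply: (@near_zero_of_small_representative _ _ _ _ e m) t_lt _; first by rewrite -t_eq /e /m; lia.
by rewrite /e; lia.
Qed.

Lemma residue_inj P (D : int) : prime P -> ~~ (P %| absz D) ->
  {in gtn P &, injective (residue P D)}.
Proof.
move=> P_prime P_ndvd r1 r2; rewrite !unfold_in /= => r1_lt r2_lt.
have P_neq0 : (P%:Z != 0)%R by rewrite eqz_nat -lt0n prime_gt0.
rewrite /residue => /(congr1 Posz); rewrite !gez0_abs ?modz_ge0 // => /eqP.
rewrite eqz_mod_dvd -mulrBl Gauss_dvdzl ?dvdzE /=; last by rewrite coprimezE prime_coprime.
have [r_eq0 | r_neq] := eqVneq (absz (r1%:Z - r2%:Z)%R) 0; first by lia.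
by move=> /dvdn_leq; rewrite lt0n r_neq => /(_ isT); lia.
Qed.

Definition near_zero_residues (k P L : nat) : seq nat :=
  iota 0 (k * P %/ L).+1 ++ [seq P - i | i <- iota 0 (k * P %/ L).+1].

Lemma near_zero_residuesP k P L t : 0 < L -> t <= P ->
  near_zero k P L t -> t \in near_zero_residues k P L.
Proof.
move=> L_gt0 t_le /orP [small | small]; rewrite mem_cat; apply/orP; [left | right].
  by rewrite mem_iota add0n ltnS leq_divRL //; lia.
apply/mapP; exists (P - t); last by lia.
by rewrite mem_iota add0n ltnS leq_divRL //; lia.
Qed.

Lemma card_near_zero_residue k P L (D : int) : prime P -> ~~ (P %| absz D) -> 0 < L ->
  #|[set r : 'I_(P.-1).+1 | near_zero k P L (residue P D r)]| <= 2 * (k * P %/ L).+1.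
Proof.
move=> P_prime P_ndvd L_gt0.
have P_eq : (P.-1).+1 = P by rewrite prednK // prime_gt0.
have -> : 2 * (k * P %/ L).+1 = size (near_zero_residues k P L).
  by rewrite size_cat size_map size_iota; lia.
rewrite cardE -(size_map (fun r : 'I_(P.-1).+1 => residue P D r)).
apply: uniq_leq_size.
  rewrite map_inj_in_uniq ?enum_uniq // => r1 r2 _ _ /residue_inj eq_r.
  by apply: val_inj; apply: eq_r P_prime P_ndvd _ _; rewrite unfold_in /= -[in X in _ < X]P_eq.
move=> t /mapP [r]; rewrite mem_enum inE => near ->.
apply: near_zero_residuesP => //.
by rewrite ltnW // residue_lt // prime_gt0.
Qed.

Definition sum_equal_protocol k (P l : nat) (g : int) : protocol k :=
  @Protocol k P.-1 (fun _ x r => bits l (quantize P (2 ^ l) (r * x)))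
    (fun ms r => sum_test k P (2 ^ l) g r (\sum_(i < k) nat_of_bits (ms i))).

Lemma run_sum_equal_protocol k P l g x r : 0 < P ->
  @run k (sum_equal_protocol k P l g) x r
  = sum_test k P (2 ^ l) g r (\sum_(i < k) quantize P (2 ^ l) (r * x i)).
Proof.
move=> P_gt0; rewrite /run /=; congr sum_test; apply: eq_bigr => i _.
by rewrite bitsK // quantize_lt // expn_gt0.
Qed.

Lemma card_errors_sum_equal_protocol k n P l g (x : 'I_k -> nat) :
  0 < k -> prime P -> k * 2 ^ n + absz g < P -> valid_input n x ->
  #|[set r : 'I_(P.-1).+1 | @run k (sum_equal_protocol k P l g) x r != sum_equal g x]|
    <= 2 * (k * P %/ 2 ^ l).+1.
Proof.
move=> k_gt0 P_prime P_big x_valid.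
have P_gt0 := prime_gt0 P_prime.
rewrite /sum_equal; case: eqP => [sum_g | sum_neq].
  rewrite (_ : [set _ | _] = set0) ?cards0 //; apply/setP => r.
  by rewrite !inE run_sum_equal_protocol // sum_test_complete.
set S := \sum_(i < k) x i.
have sum_Z : (\sum_(i < k) (x i)%:Z = S%:Z)%R.
  by rewrite (big_morph Posz PoszD (erefl (0 : int))).
have S_lt : S + k <= k * 2 ^ n := sum_ltn_const x_valid.
have P_ndvd : ~~ (P %| absz (S%:Z - g)%R).
  have D_lt : absz (S%:Z - g)%R < P by lia.
  apply: contraL D_lt => /dvdn_leq; rewrite -leqNgt; apply.
  by rewrite absz_gt0 subr_eq0; apply/eqP; rewrite -sum_Z.
have L_gt0 : 0 < 2 ^ l by rewrite expn_gt0.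
apply: leq_trans _ (card_near_zero_residue k P_prime P_ndvd L_gt0).
apply: subset_leq_card; apply/subsetP => r; rewrite !inE run_sum_equal_protocol //.
by rewrite eqbF_neg negbK -sum_Z; apply: sum_test_sound.
Qed.

Section RealBounds.

Local Open Scope R_scope.

Lemma INR_expn2 l : INR (2 ^ l)%N = 2 ^ l.
Proof. by elim: l => [|l IH]; rewrite ?expn0 // expnS mult_INR IH. Qed.

Lemma exists_pow2_between (y : R) : 1 <= y -> exists l, y <= 2 ^ l /\ 2 ^ l < 2 * y.
Proof.
move=> y_ge1.
have y_le_pow : exists l, (fun l => Rle_dec y (2 ^ l) : bool) l.
  have [N N_gt] := INR_archimed 1 y Rlt_0_1.
  have N_le : INR N <= 2 ^ N by rewrite -INR_expn2; apply/le_INR/leP/ltnW/ltn_expl.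
  by exists N; case: Rle_dec => // y_gt; lra.
case: (ex_minnP y_le_pow) => l; case: Rle_dec => // y_le _ l_min.
exists l; split=> //; case: l y_le l_min => [|l] y_le l_min; first by simpl in *; lra.
have : ~~ (Rle_dec y (2 ^ l) : bool) by apply/negP => /l_min; rewrite ltnn.
by case: Rle_dec => // y_gt _ /=; lra.
Qed.

Lemma exists_precision (k : nat) (eps : R) : (0 < k)%N -> 0 < eps -> eps < 1 ->
  exists l, 4 * INR k <= eps * 2 ^ l /\ INR l <= log2 (INR k / eps) + 3.
Proof.
move=> k_gt0 eps_gt0 eps_lt1.
have k_ge1 : 1 <= INR k by apply/(le_INR 1)/leP.
pose y := 4 * INR k / eps.
have y_eps : y * eps = 4 * INR k by rewrite /y; field; lra.
have [|l [y_le_pow pow_lt_2y]] := exists_pow2_between (y := y); first by nra.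
exists l; split; first by nra.
have ln2_gt0 : 0 < ln 2 by rewrite -ln_1; apply: ln_increasing; lra.
have ratio_gt0 : 0 < INR k / eps by apply: Rdiv_lt_0_compat; lra.
set q := INR k / eps in ratio_gt0 *.
have ln_pow2 n : ln (2 ^ n) = INR n * ln 2 by apply: ln_pow; lra.
have : ln (2 ^ l) < ln (2 ^ 3 * q).
  have -> : 2 ^ 3 * q = 2 * y by rewrite /q /y; field; lra.
  by apply: ln_increasing => //; apply: pow_lt; lra.
rewrite ln_mult ?ln_pow2 //; last by apply: pow_lt; lra.
move=> /= ln_lt; apply: (Rmult_le_reg_r (ln 2)) => //.
have -> : (log2 q + 3) * ln 2 = ln q + 3 * ln 2 by rewrite /log2; field; lra.
lra.
Qed.

Lemma error_ratio_le (a k P L : nat) (eps : R) : (0 < P)%N -> (0 < L)%N ->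
  (a <= 2 * (k * P %/ L).+1)%N -> 4 * INR k <= eps * INR L -> 4 <= eps * INR P ->
  INR a / INR P <= eps.
Proof.
move=> P_gt0 L_gt0 a_le kL_le P_ge.
have aL_le : (a * L <= 2 * (k * P) + 2 * L)%N.
  have := leq_divM (k * P) L; have := leq_mul2r L a (2 * (k * P %/ L).+1).
  by rewrite a_le orbT; lia.
move/leP/le_INR: aL_le; rewrite plus_INR !mult_INR /= => aL_le.
have L_pos : 0 < INR L by apply/lt_0_INR/ltP.
have P_pos : 0 < INR P by apply/lt_0_INR/ltP.
have a_le_epsP : INR a <= eps * INR P by apply: (Rmult_le_reg_r (INR L)) => //; nra.
by rewrite /Rdiv; apply: (Rmult_le_reg_r (INR P)) => //; rewrite Rmult_assoc Rinv_l; lra.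
Qed.

End RealBounds.

Theorem mainTheorem11 :
  exists C : R,
  forall (k n : nat), 0 < k -> 0 < n ->
  forall eps : R, Rlt 0 eps -> Rlt eps 1 ->
  forall g : int,
  exists P : protocol k,
    error_at_most n g P eps /\
    comm_at_most n P
      (Rplus (Rmult (INR k) (log2 (Rdiv (INR k) eps))) (Rmult C (INR k))).
Proof.
exists (3 : R) => k n k_gt0 _ eps eps_gt0 eps_lt1 g.
have [l [kL_le l_le]] := exists_precision k_gt0 eps_gt0 eps_lt1.
have [N N_gt] := INR_archimed eps 4 eps_gt0.
have [P P_gt P_prime] := prime_above (maxn (k * 2 ^ n + absz g) N).
have P_gt0 := prime_gt0 P_prime.
exists (sum_equal_protocol k P l g); split.
- move=> x x_valid; rewrite /error_prob.
  change (rand_size _) with P.-1; set errors := #|_|; rewrite prednK //.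
  have L_gt0 : (0 < 2 ^ l)%N by rewrite expn_gt0.
  apply: (error_ratio_le P_gt0 L_gt0).
  + apply: card_errors_sum_equal_protocol k_gt0 P_prime _ x_valid.
    by apply: leq_ltn_trans P_gt; apply: leq_maxl.
  + by rewrite INR_expn2.
  + have : (N <= P)%N by apply/ltnW/leq_ltn_trans/P_gt; apply: leq_maxr.
    by move=> /leP/le_INR; nra.
- move=> x r _; rewrite /total_bits /=.
  under eq_bigr do rewrite size_bits.
  rewrite sum_nat_const card_ord mult_INR.
  have := pos_INR k; nra.
Qed.
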